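(* Let $G=(V,E)$ be a simple undirected graph on $n$ nodes, let $0<\epsilon<\frac13$, $\delta>0$, $p\in(0,1)$, and let $D\subseteq V$ be an $\epsilon^3$-near clique with $|D|\ge\delta n$; let $C=K_{\epsilon^2}(D)\cap D$. Let $S^{(1)}$ be a random subset of $V$ containing each node independently with probability $p/2$, and let $X^*=S^{(1)}\cap C$. Call $X^*$ representative if (1) $|K_{\epsilon^2}(D)\setminus K_{2\epsilon^2}(X^* )|<\epsilon|C|$ and (2) $|K_{2\epsilon^2}(X^* )\setminus K_{3\epsilon^2}(C)|<\epsilon^2|C|$. Then $\Pr[X^*\text{ is representative}]\ge1-\frac{1}{\epsilon^2\delta}\cdot e^{-\Omega(\epsilon^4\delta pn)}$.
   Context: $\Gamma(v)$ denotes the set of neighbors of $v$. For $Y\subseteq V$ and $0\le\eta\le1$: $K_\eta(Y)=\{v\in V: |\Gamma(v)\cap Y|\ge(1-\eta)|Y|\}$. Each undirected edge is counted as two directed edges; a set $D\subseteq V$ is a $\gamma$-near clique if $|\{(u,v)\in D\times D:\{u,v\}\in E\}|\ge(1-\gamma)|D|(|D|-1)$. $\Omega(\cdot)$ hides an absolute positive constant. *)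

From HB Require Import structures.
From mathcomp Require Import all_boot all_order all_algebra.
From mathcomp Require Import reals Rstruct sequences exp.
From Stdlib Require Import Rdefinitions.
Set Implicit Arguments. Unset Strict Implicit. Unset Printing Implicit Defensive.
Import Order.TTheory GRing.Theory Num.Theory.
Local Open Scope ring_scope.

Section Defs.
Variable V : finType.

Definition simple_graph (e : rel V) : Prop := symmetric e /\ irreflexive e.

Definition nbhd (e : rel V) (v : V) : {set V} := [set u | e v u].

Definition Kset (e : rel V) (eta : R) (Y : {set V}) : {set V} :=
  [set v | (1 - eta) * (#|Y|%:R : R) <= (#|nbhd e v :&: Y|%:R : R)].

(* number of ordered pairs (u,v) in D x D with {u,v} an edge
   (each undirected edge counted twice) *)
Definition dir_edges (e : rel V) (D : {set V}) : nat :=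
  #|[set uv in setX D D | e uv.1 uv.2]|.

Definition near_clique (e : rel V) (gamma : R) (D : {set V}) : Prop :=
  (1 - gamma) * (#|D|%:R : R) * ((#|D|%:R : R) - 1) <= (dir_edges e D)%:R.

Definition prob_subset (q : R) (P : pred {set V}) : R :=
  \sum_(S : {set V} | P S)
     ((\prod_(v in S) q) * (\prod_(v in ~: S) (1 - q))).

Definition representative (e : rel V) (eps : R) (D C X : {set V}) : bool :=
  ((#|Kset e (eps ^+ 2) D :\: Kset e (2 * eps ^+ 2) X|%:R : R)
      < eps * (#|C|%:R : R)) &&
  ((#|Kset e (2 * eps ^+ 2) X :\: Kset e (3 * eps ^+ 2) C|%:R : R)
      < eps ^+ 2 * (#|C|%:R : R)).
End Defs.

From HB Require Import structures.
From mathcomp Require Import all_boot all_order all_algebra.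
From mathcomp Require Import reals Rstruct sequences exp.
From mathcomp Require Import ring lra.
From Stdlib Require Import Rdefinitions.
Set Implicit Arguments. Unset Strict Implicit. Unset Printing Implicit Defensive.
Import Order.TTheory GRing.Theory Num.Theory.
Local Open Scope ring_scope.

(* Write k = eps^2, m = |C|, q = p/2 and X = S :&: C. Unless k|D| is large the
   claimed bound is negative, and once k|D| >= 9 the near-clique condition forces
   m >= 5|D|/8. If |X| is within a factor 1 +- 1/20 of its mean qm, a vertex of
   K_k(D) outside K_2k(X) has at least 1.9 kqm non-neighbours in X, against a mean
   of at most 1.6 kqm, and a vertex of K_2k(X) outside K_3k(C) has at most 2.1 kqm
   of them, against a mean of at least 3 kqm. Chernoff bounds give each of these
   events probability at most exp(-kqm/400); Markov's inequality on the numbers of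
   such vertices and a union bound then yield the claim with c = 1/1600. *)

(* Arguments of type [R] are parsed in Stdlib's [R_scope]; [%ring] selects the
   MathComp notations there. *)
Delimit Scope ring_scope with ring.

Lemma sqr_le_ninth (x : R) : 0 <= x -> x <= 1/3 -> x ^+ 2 <= 1/9.
Proof. by move=> x0 x3; rewrite expr2; have := ler_pM x0 x0 x3 x3; lra. Qed.

Lemma expR_mul1B_le1 (x : R) : expR x * (1 - x) <= 1.
Proof.
have := expR_ge1Dx (- x); have := expRxMexpNx_1 x; have := expR_ge0 x; nra.
Qed.

Lemma expR_le_quadratic (x : R) : 0 <= x <= 1/2 -> expR x <= 1 + x + 2 * x ^+ 2.
Proof.
move=> /andP[x0 x1]; have := expR_mul1B_le1 x; have := expR_ge0 x.
rewrite expr2; nra.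
Qed.

Lemma expRN_le_quadratic (x : R) : 0 <= x -> expR (- x) <= 1 - x + x ^+ 2.
Proof.
move=> x0; have x1 : 0 < 1 + x by lra.
rewrite -(ler_pM2r x1); have := expR_mul1B_le1 (- x).
rewrite opprK expr2; nra.
Qed.

Lemma expRN_ge_sqr (x : R) : x <= 2 -> (1 - x / 2) ^+ 2 <= expR (- x).
Proof.
move=> x2; have -> : - x = - (x / 2) + - (x / 2) by lra.
rewrite expRD expr2; have := expR_ge1Dx (- (x / 2)); nra.
Qed.

Section RandomSubset.
Variables (V : finType) (q : R).
Hypotheses (q_ge0 : 0 <= q) (q_le1 : q <= 1).

Definition subset_weight (S : {set V}) : R :=
  (\prod_(v in S) q) * (\prod_(v in ~: S) (1 - q)).

Definition expect (g : {set V} -> R) : R := \sum_S subset_weight S * g S.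

Lemma subset_weight_ge0 S : 0 <= subset_weight S.
Proof. by apply: mulr_ge0; apply: prodr_ge0 => v _ //; rewrite subr_ge0. Qed.

Lemma prob_subsetE (P : pred {set V}) :
  prob_subset q P = expect (fun S => (P S)%:R).
Proof.
rewrite /prob_subset /expect big_mkcond /=; apply: eq_bigr => S _.
by case: (P S); rewrite ?mulr1 ?mulr0.
Qed.

Lemma ler_expect f g : (forall S, f S <= g S) -> expect f <= expect g.
Proof.
by move=> fg; apply: ler_sum => S _; apply: ler_wpM2l; rewrite ?subset_weight_ge0.
Qed.

Lemma expectD f g : expect (fun S => f S + g S) = expect f + expect g.
Proof. by rewrite /expect -big_split; apply: eq_bigr => S _; rewrite mulrDr. Qed.

Lemma expectMr g k : expect (fun S => g S * k) = expect g * k.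
Proof. by rewrite /expect big_distrl; apply: eq_bigr => S _; rewrite mulrA. Qed.

Lemma expect_prod (f : V -> R) :
  expect (fun S => \prod_(v in S) f v) = \prod_v (q * f v + (1 - q)).
Proof.
rewrite bigA_distr /expect; apply: eq_bigr => S _.
rewrite [RHS](bigID (mem S)) /= /subset_weight mulrAC -big_split /=.
congr (_ * _); first by apply: eq_big => // v ->.
rewrite big_mkcond [RHS]big_mkcond; apply: eq_bigr => v _.
by rewrite in_setC; case: (v \in S).
Qed.

Lemma expect1 : expect (fun _ => 1) = 1.
Proof.
transitivity (expect (fun S => \prod_(v in S) (1 : R))).
  by apply: eq_bigr => S _; rewrite big1.
by rewrite expect_prod big1 // => v _; rewrite mulr1 subrKC.
Qed.

Lemma expect_expR_card (A : {set V}) (mu : R) :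
  expect (fun S => expR (mu * #|S :&: A|%:R)) = (q * expR mu + (1 - q)) ^+ #|A|.
Proof.
transitivity (expect (fun S => \prod_(v in S) (if v \in A then expR mu else 1))).
  apply: eq_bigr => S _; congr (_ * _).
  rewrite -big_mkcondr /= expRM_natr -prodr_const.
  by apply: eq_bigl => v; rewrite in_setI.
rewrite expect_prod (bigID (mem A)) /= [X in _ * X]big1 ?mulr1; last first.
  by move=> v /negbTE ->; rewrite mulr1 subrKC.
by rewrite -prodr_const; apply: eq_bigr => v ->.
Qed.

Lemma expect_card (K : {set V}) (P : V -> pred {set V}) :
  expect (fun S => #|[set v in K | P v S]|%:R) = \sum_(v in K) prob_subset q (P v).
Proof.
have cardE S : #|[set v in K | P v S]|%:R = \sum_(v in K) ((P v S)%:R : R).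
  rewrite -sum1_card natr_sum big_mkcond [RHS]big_mkcond /=.
  by apply: eq_bigr => v _; rewrite inE; case: (v \in K); case: (P v S).
rewrite /expect; under eq_bigr => S _ do rewrite cardE mulr_sumr.
by rewrite exchange_big /=; apply: eq_bigr => v _; rewrite prob_subsetE.
Qed.

Lemma prob_subset_ge0 (P : pred {set V}) : 0 <= prob_subset q P.
Proof.
by rewrite prob_subsetE; apply: sumr_ge0 => S _; rewrite mulr_ge0 ?subset_weight_ge0.
Qed.

Lemma prob_subset_le (P Q : pred {set V}) :
  (forall S, P S -> Q S) -> prob_subset q P <= prob_subset q Q.
Proof.
move=> PQ; rewrite !prob_subsetE; apply: ler_expect => S.
by case: (boolP (P S)) => [/PQ -> //|_]; rewrite ler0n.
Qed.

Lemma prob_subset_orb (P Q : pred {set V}) :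
  prob_subset q (fun S => P S || Q S) <= prob_subset q P + prob_subset q Q.
Proof.
rewrite !prob_subsetE -expectD; apply: ler_expect => S.
by case: (P S); case: (Q S); rewrite /= ?mulr1n ?mulr0n; lra.
Qed.

Lemma prob_subsetC (P : pred {set V}) :
  prob_subset q (fun S => ~~ P S) = 1 - prob_subset q P.
Proof.
apply/eqP; rewrite eq_sym subr_eq -expect1 !prob_subsetE -expectD; apply/eqP.
by apply: eq_bigr => S _; case: (P S); rewrite /= ?mulr1n ?mulr0n ?addr0 ?add0r.
Qed.

Lemma prob_subset_markov (N : {set V} -> R) (r : R) :
  0 < r -> (forall S, 0 <= N S) -> prob_subset q (fun S => r <= N S) <= expect N / r.
Proof.
move=> r0 N0; rewrite prob_subsetE -expectMr; apply: ler_expect => S.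
case: (lerP r (N S)) => rN /=; rewrite ?mulr1n ?mulr0n; last by rewrite divr_ge0 // ltW.
by rewrite ler_pdivlMr // mul1r.
Qed.

Lemma prob_subset_card_ge (K : {set V}) (P : V -> pred {set V}) (r : R) : 0 < r ->
  prob_subset q (fun S => r <= #|[set v in K | P v S]|%:R)
    <= (\sum_(v in K) prob_subset q (P v)) / r.
Proof. by move=> r0; rewrite -expect_card; apply: prob_subset_markov => // S. Qed.

Lemma prob_subset_chernoff (A : {set V}) (mu b : R) (P : pred {set V}) :
  (forall S, P S -> 0 <= mu * #|S :&: A|%:R + b) ->
  prob_subset q P <= expR (b + #|A|%:R * (q * (expR mu - 1))).
Proof.
move=> Pb; rewrite prob_subsetE.
apply: le_trans (ler_expect (g := fun S => expR (mu * #|S :&: A|%:R) * expR b) _) _.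
  move=> S; rewrite -expRD; case: (boolP (P S)) => PS /=; last exact: expR_ge0.
  by rewrite mulr1n; apply: le_trans (expR_ge1Dx _); rewrite lerDl Pb.
rewrite expectMr expect_expR_card expRD expRM_natl mulrC.
apply: ler_wpM2l; first exact: expR_ge0.
apply: lerXn2r; rewrite ?nnegrE ?expR_ge0 //.
  by rewrite addr_ge0 ?subr_ge0 // mulr_ge0 // expR_ge0.
by have := expR_ge1Dx (q * (expR mu - 1)); lra.
Qed.

Lemma chernoff_upper (A : {set V}) (M t : R) :
  0 <= t <= 2 -> q * #|A|%:R <= M ->
  prob_subset q (fun S => (1 + t) * M <= #|S :&: A|%:R) <= expR (- (t ^+ 2 * M / 8)).
Proof.
move=> /andP[t0 t2] AM.
apply: le_trans (prob_subset_chernoff (A := A) (mu := (t / 4)%ring)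
  (b := (- (t / 4 * ((1 + t) * M)))%ring) _) _.
  by move=> S AS; rewrite -mulrBr mulr_ge0 ?subr_ge0 //; lra.
rewrite ler_expR.
have qA0 : 0 <= q * #|A|%:R by rewrite mulr_ge0.
have t4 : 0 <= t / 4 <= 1 / 2 by apply/andP; split; lra.
have := expR_le_quadratic t4; have := expR_ge1Dx (t / 4).
rewrite expr2; nra.
Qed.

Lemma chernoff_lower (A : {set V}) (M t : R) :
  0 <= t -> 0 <= M <= q * #|A|%:R ->
  prob_subset q (fun S => #|S :&: A|%:R <= (1 - t) * M) <= expR (- (t ^+ 2 * M / 4)).
Proof.
move=> t0 /andP[M0 AM].
apply: le_trans (prob_subset_chernoff (A := A) (mu := (- (t / 2))%ring)
  (b := (t / 2 * ((1 - t) * M))%ring) _) _.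
  by move=> S AS; rewrite mulNr addrC -mulrBr mulr_ge0 ?subr_ge0 //; lra.
rewrite ler_expR.
have t2 : 0 <= t / 2 by lra.
have := expRN_le_quadratic t2; have := expR_le1 (- (t / 2)).
rewrite expr2; nra.
Qed.
End RandomSubset.

Section NearClique.
Variables (V : finType) (e : rel V).

Lemma Kset_nonnbrE (eta : R) (X : {set V}) (v : V) :
  (v \in Kset e eta X) = (#|X :\: nbhd e v|%:R <= eta * #|X|%:R).
Proof.
rewrite inE -(cardsID (nbhd e v) X) natrD setIC.
by apply/idP/idP => h; lra.
Qed.

Lemma dir_edges_sum (D : {set V}) :
  dir_edges e D = (\sum_(u in D) #|nbhd e u :&: D|)%N.
Proof.
rewrite /dir_edges -sum1_card.
rewrite (eq_bigl (fun uv : V * V => (uv.1 \in D) && ((uv.2 \in D) && e uv.1 uv.2)));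
  last by case=> u v; rewrite !inE /= andbA.
rewrite -(pair_big_dep (mem D) (fun u v => (v \in D) && e u v) (fun _ _ => 1%N)) /=.
apply: eq_bigr => u _; rewrite sum1_card; apply: eq_card => v.
by rewrite !inE andbC.
Qed.

Hypothesis e_simple : simple_graph e.

Lemma card_nbhd_le (D : {set V}) (u : V) :
  u \in D -> (#|nbhd e u :&: D|%:R : R) <= #|D|%:R - 1.
Proof.
move=> uD; rewrite (cardsD1 u D) uD add1n mulrSr addrK ler_nat.
apply: subset_leq_card; apply/subsetP => v; rewrite !inE => /andP[euv ->].
rewrite andbT; apply: contraTneq euv => ->.
by case: e_simple => _ ->.
Qed.

Lemma dir_edges_le_core (eta : R) (D : {set V}) :
  let m := #|Kset e eta D :&: D|%:R in let d := #|D|%:R in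
  (dir_edges e D)%:R <= m * (d - 1) + (d - m) * ((1 - eta) * d).
Proof.
rewrite /= dir_edges_sum natr_sum (big_setID (Kset e eta D)) /= setIC.
have DK : (#|D|%:R : R) = #|Kset e eta D :&: D|%:R + #|D :\: Kset e eta D|%:R.
  by rewrite -natrD setIC cardsID.
rewrite {2}DK addrAC subrr add0r.
apply: lerD; rewrite mulr_natl -sumr_const; apply: ler_sum => u; rewrite !inE.
  by case/andP=> _ uD; apply: card_nbhd_le.
by case/andP=> uK uD; apply: ltW; rewrite ltNge.
Qed.

Lemma card_core_deficit (gamma eta : R) (D : {set V}) :
  near_clique e gamma D ->
  let m := #|Kset e eta D :&: D|%:R in let d := #|D|%:R in
  (d - m) * (eta * d - 1) <= gamma * d * (d - 1).
Proof. by rewrite /near_clique /= => nc; have /= := dir_edges_le_core eta D; lra. Qed.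
End NearClique.

Lemma card_core_ge (V : finType) (e : rel V) (eps : R) (D : {set V}) :
  simple_graph e -> 0 < eps <= 1/3 -> near_clique e (eps ^+ 3) D ->
  9 <= eps ^+ 2 * #|D|%:R -> 5/8 * #|D|%:R <= #|Kset e (eps ^+ 2) D :&: D|%:R :> R.
Proof.
move=> se /andP[eps_gt0 eps_le] /(card_core_deficit se (eps ^+ 2)) /=.
have md : #|Kset e (eps ^+ 2) D :&: D|%:R <= #|D|%:R :> R.
  by rewrite ler_nat subset_leq_card // subsetIr.
rewrite [eps ^+ 3]exprS; move: (#|Kset _ _ _ :&: _|%:R) md => m md.
have d0 : 0 <= #|D|%:R :> R := ler0n _ _; have k0 : 0 <= eps ^+ 2 := sqr_ge0 eps.
move: (eps ^+ 2) (#|D|%:R) md d0 k0 => k d md d0 k0 deficit kd9.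
have edge_le : eps * k * d * (d - 1) <= 1/3 * (k * d) * d.
  have kd0 : 0 <= k * d by rewrite mulr_ge0.
  by have := ler_wpM2l kd0 (ler_wpM2r d0 (ltW eps_gt0)); nra.
have : (d - m) * (8/9 * (k * d)) <= 1/3 * (k * d) * d.
  by apply: le_trans edge_le; apply: le_trans deficit; rewrite ler_wpM2l ?subr_ge0 //; lra.
nra.
Qed.

Section Representative.
Variables (V : finType) (e : rel V) (eps q : R) (D : {set V}).

Local Notation k := (eps ^+ 2).
Local Notation C := (Kset e k D :&: D).
Local Notation m := (#|C|%:R).

Definition too_large (S : {set V}) : bool := 21/20 * q * m <= #|S :&: C|%:R.
Definition too_small (S : {set V}) : bool := #|S :&: C|%:R <= 19/20 * q * m.
Definition lost (v : V) (S : {set V}) : bool :=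
  19/10 * k * q * m <= #|S :&: (C :\: nbhd e v)|%:R.
Definition spurious (v : V) (S : {set V}) : bool :=
  #|S :&: (C :\: nbhd e v)|%:R <= 21/10 * k * q * m.

Lemma lost_subset (S : {set V}) : 19/20 * q * m <= #|S :&: C|%:R ->
  Kset e k D :\: Kset e (2 * k)%ring (S :&: C) \subset [set v in Kset e k D | lost v S].
Proof.
move=> above; apply/subsetP => v; rewrite in_setD Kset_nonnbrE -ltNge.
case/andP=> /ltW far vK; rewrite inE vK /lost setIDA; apply: le_trans far.
have := sqr_ge0 eps; nra.
Qed.

Lemma spurious_subset (S : {set V}) : #|S :&: C|%:R <= 21/20 * q * m ->
  Kset e (2 * k)%ring (S :&: C) :\: Kset e (3 * k)%ring C
    \subset [set v in ~: Kset e (3 * k)%ring C | spurious v S].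
Proof.
move=> below; apply/subsetP => v; rewrite in_setD.
case/andP=> vK3; rewrite Kset_nonnbrE => near.
rewrite inE in_setC vK3 /= /spurious setIDA.
have := sqr_ge0 eps; nra.
Qed.

Lemma not_representative_cases (S : {set V}) :
  ~~ representative e eps D C (S :&: C) ->
  [|| too_large S, too_small S,
      eps * m <= #|[set v in Kset e k D | lost v S]|%:R
    | k * m <= #|[set v in ~: Kset e (3 * k)%ring C | spurious v S]|%:R].
Proof.
apply: contraR; rewrite !negb_or -!ltNge => /and4P[below above few_lost few_spurious].
rewrite /representative !RealsE /=; apply/andP; split.
  apply: le_lt_trans few_lost; rewrite ler_nat.
  by apply/subset_leq_card/lost_subset/ltW.
apply: le_lt_trans few_spurious; rewrite ler_nat.
by apply/subset_leq_card/spurious_subset/ltW.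
Qed.

Hypotheses (eps_gt0 : 0 < eps) (eps_le : eps <= 1/3) (q_ge0 : 0 <= q) (q_le1 : q <= 1).

Let k_le : k <= 1/9. Proof. exact: sqr_le_ninth (ltW eps_gt0) eps_le. Qed.
Let qm_ge0 : 0 <= q * m. Proof. by rewrite mulr_ge0. Qed.
Local Notation E := (expR (- (k * q * m / 400))).

Lemma prob_too_large_le : prob_subset q too_large <= E.
Proof.
have t : (0 <= 1/20 :> R) && (1/20 <= 2 :> R) by apply/andP; split; lra.
apply: le_trans (prob_subset_le q_ge0 q_le1
  (Q := fun S => (1 + 1/20) * (q * m) <= #|S :&: C|%:R) _) _.
  by move=> S; rewrite /too_large; lra.
apply: le_trans (chernoff_upper q_ge0 q_le1 t (lexx _)) _.
by rewrite ler_expR expr2; have := ler_wpM2r qm_ge0 k_le; have := qm_ge0; lra.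
Qed.

Lemma prob_too_small_le : prob_subset q too_small <= E.
Proof.
have t : 0 <= 1/20 :> R by lra.
have M : (0 <= q * m) && (q * m <= q * #|C|%:R) by rewrite qm_ge0 lexx.
apply: le_trans (prob_subset_le q_ge0 q_le1
  (Q := fun S => #|S :&: C|%:R <= (1 - 1/20) * (q * m)) _) _.
  by move=> S; rewrite /too_small; lra.
apply: le_trans (chernoff_lower q_ge0 q_le1 t M) _.
by rewrite ler_expR expr2; have := ler_wpM2r qm_ge0 k_le; have := qm_ge0; lra.
Qed.

Lemma prob_lost_le (v : V) :
  5/8 * #|D|%:R <= m :> R -> v \in Kset e k D -> prob_subset q (lost v) <= E.
Proof.
move=> C_large; rewrite Kset_nonnbrE => vK.
have kq0 : 0 <= k * q by rewrite mulr_ge0 ?sqr_ge0.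
have AM : q * #|C :\: nbhd e v|%:R <= 8/5 * k * q * m.
  have CD : (#|C :\: nbhd e v|%:R : R) <= #|D :\: nbhd e v|%:R.
    by rewrite ler_nat subset_leq_card // setSD // subsetIr.
  have := ler_wpM2l q_ge0 (le_trans CD vK); have := ler_wpM2l kq0 C_large; lra.
have t : (0 <= 3/16 :> R) && (3/16 <= 2 :> R) by apply/andP; split; lra.
apply: le_trans (prob_subset_le q_ge0 q_le1
  (Q := fun S => (1 + 3/16) * (8/5 * k * q * m) <= #|S :&: (C :\: nbhd e v)|%:R) _) _.
  by move=> S; rewrite /lost; lra.
apply: le_trans (chernoff_upper q_ge0 q_le1 t AM) _.
by rewrite ler_expR expr2; have := mulr_ge0 kq0 (ler0n _ #|C|); lra.
Qed.

Lemma prob_spurious_le (v : V) :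
  v \notin Kset e (3 * k)%ring C -> prob_subset q (spurious v) <= E.
Proof.
rewrite Kset_nonnbrE -ltNge => /ltW vK.
have kqm0 : 0 <= k * q * m := mulr_ge0 (mulr_ge0 (sqr_ge0 eps) q_ge0) (ler0n _ _).
have M : (0 <= 3 * k * q * m) && (3 * k * q * m <= q * #|C :\: nbhd e v|%:R).
  by apply/andP; split; have := ler_wpM2l q_ge0 vK; lra.
have t : 0 <= 3/10 :> R by lra.
apply: le_trans (prob_subset_le q_ge0 q_le1
  (Q := fun S => #|S :&: (C :\: nbhd e v)|%:R <= (1 - 3/10) * (3 * k * q * m)) _) _.
  by move=> S; rewrite /spurious; lra.
apply: le_trans (chernoff_lower q_ge0 q_le1 t M) _.
by rewrite ler_expR expr2; lra.
Qed.

Lemma representative_failure_le :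
  (0 < #|C|)%nat -> 5/8 * #|D|%:R <= m :> R ->
  1 - prob_subset q (fun S => representative e eps D C (S :&: C))
    <= (2 + #|V|%:R / (eps * m) + #|V|%:R / (k * m)) * E.
Proof.
move=> C_gt0 C_large; have m_gt0 : 0 < m :> R by rewrite ltr0n.
have many_le (P : V -> pred {set V}) (K : {set V}) (r : R) : 0 < r ->
    (forall v, v \in K -> prob_subset q (P v) <= E) ->
    prob_subset q (fun S => r <= #|[set v in K | P v S]|%:R) <= #|V|%:R / r * E.
  move=> r_gt0 PE; apply: le_trans (prob_subset_card_ge q_ge0 q_le1 K P r_gt0) _.
  rewrite mulrAC ler_pM2r ?invr_gt0 //; apply: le_trans (ler_sum _ PE) _.
  by rewrite sumr_const -[X in X <= _]mulr_natl ler_pM2r ?expR_gt0 // ler_nat max_card.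
rewrite -prob_subsetC.
apply: le_trans (prob_subset_le q_ge0 q_le1
  (P := fun S => ~~ representative e eps D C (S :&: C)) not_representative_cases) _.
have -> : (2 + #|V|%:R / (eps * m) + #|V|%:R / (k * m)) * E
    = E + (E + (#|V|%:R / (eps * m) * E + #|V|%:R / (k * m) * E)) by ring.
apply: le_trans (prob_subset_orb q_ge0 q_le1 _ _) _.
apply: lerD; first exact: prob_too_large_le.
apply: le_trans (prob_subset_orb q_ge0 q_le1 _ _) _.
apply: lerD; first exact: prob_too_small_le.
apply: le_trans (prob_subset_orb q_ge0 q_le1 _ _) _.
apply: lerD; apply: many_le.
- by rewrite mulr_gt0.
- by move=> v; exact: prob_lost_le.
- by rewrite mulr_gt0 ?exprn_gt0.
- by move=> v; rewrite in_setC; exact: prob_spurious_le.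
Qed.
End Representative.

Lemma five_expRN_le (x : R) : 1 <= x -> 5 * expR (- (9 * x)) <= expR (- x).
Proof.
move=> x_ge1; have -> : - x = - (9 * x) + 8 * x by lra.
rewrite expRD; have := expR_ge1Dx (8 * x); have := expR_ge0 (- (9 * x)); nra.
Qed.

Lemma inv_sqr_mul_ge9 (eps delta : R) :
  0 < eps <= 1/3 -> 0 < delta <= 1 -> 9 <= (eps ^+ 2 * delta)^-1.
Proof.
move=> /andP[eps_gt0 eps_le] /andP[delta_gt0 delta_le1].
have k_le := sqr_le_ninth (ltW eps_gt0) eps_le.
have t_gt0 : 0 < eps ^+ 2 * delta by rewrite mulr_gt0 ?exprn_gt0.
rewrite -(ler_pM2r t_gt0) mulVf ?gt_eqF //.
by have := ler_pM (ltW (exprn_gt0 2 eps_gt0)) (ltW delta_gt0) k_le delta_le1; lra.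
Qed.

Lemma small_exponent_vacuous (eps delta x : R) :
  0 < eps <= 1/3 -> 0 < delta <= 1 -> x <= 1 ->
  1 - (eps ^+ 2 * delta)^-1 * expR (- x) <= 0.
Proof.
move=> eps_b delta_b x_le1; have y9 := inv_sqr_mul_ge9 eps_b delta_b.
have : (1 - x / 2) ^+ 2 <= expR (- x) by apply: expRN_ge_sqr; lra.
by rewrite expr2; nra.
Qed.

Lemma failure_bound_le (eps delta p n m : R) :
  0 < eps <= 1/3 -> 0 < delta <= 1 -> 0 <= p -> 0 < n -> delta * n <= 2 * m ->
  1 <= 1/1600 * eps ^+ 4 * delta * p * n ->
  (2 + n / (eps * m) + n / (eps ^+ 2 * m)) * expR (- (eps ^+ 2 * (p * 2^-1) * m / 400))
    <= (eps ^+ 2 * delta)^-1 * expR (- (1/1600 * eps ^+ 4 * delta * p * n)).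
Proof.
move=> eps_b delta_b p_ge0 n_gt0 dn x_ge1; have y9 := inv_sqr_mul_ge9 eps_b delta_b.
case/andP: eps_b => eps_gt0 eps_le; case/andP: delta_b => delta_gt0 delta_le1.
have m_gt0 : 0 < m by nra.
have k_gt0 : 0 < eps ^+ 2 := exprn_gt0 2 eps_gt0.
have k_le_eps : eps ^+ 2 <= eps by rewrite expr2 ger_pMl //; lra.
have kd_gt0 : 0 < eps ^+ 2 * delta by rewrite mulr_gt0.
have a_le_b : n / (eps * m) <= n / (eps ^+ 2 * m).
  by rewrite ler_pM2l // lef_pV2 ?posrE ?mulr_gt0 // ler_pM2r.
have b_le : n / (eps ^+ 2 * m) <= 2 * (eps ^+ 2 * delta)^-1.
  rewrite ler_pdivrMr ?mulr_gt0 //.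
  have yn : (eps ^+ 2 * delta)^-1 * (eps ^+ 2 * delta) * n = n.
    by rewrite mulVf ?gt_eqF ?mul1r.
  have y_ge0 : 0 <= (eps ^+ 2 * delta)^-1 by rewrite invr_ge0 ltW.
  by have := ler_wpM2l y_ge0 (ler_wpM2l (ltW k_gt0) dn); lra.
have E9 : expR (- (eps ^+ 2 * (p * 2^-1) * m / 400))
    <= expR (- (9 * (1/1600 * eps ^+ 4 * delta * p * n))).
  have e4 : eps ^+ 4 = eps ^+ 2 * eps ^+ 2 by rewrite -exprD.
  have k_le := sqr_le_ninth (ltW eps_gt0) eps_le.
  have kdpn := mulr_ge0 (mulr_ge0 (ltW kd_gt0) p_ge0) (ltW n_gt0).
  have := ler_wpM2r kdpn k_le; have := ler_wpM2l (mulr_ge0 (ltW k_gt0) p_ge0) dn.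
  by rewrite ler_expR e4; lra.
have F_le : 2 + n / (eps * m) + n / (eps ^+ 2 * m) <= (eps ^+ 2 * delta)^-1 * 5 by lra.
apply: le_trans (ler_wpM2r (expR_ge0 _) F_le) _.
rewrite -[_ * 5 * _]mulrA ler_pM2l ?(lt_le_trans _ y9) //.
by apply: le_trans (five_expRN_le x_ge1); rewrite ler_pM2l.
Qed.

Lemma exponent_ge1_sqr_card_ge9 (eps delta p n d : R) :
  0 < eps <= 1/3 -> 0 <= p <= 1 -> 0 <= d -> delta * n <= d ->
  1 <= 1/1600 * eps ^+ 4 * delta * p * n -> 9 <= eps ^+ 2 * d.
Proof.
move=> /andP[eps_gt0 eps_le] /andP[p_ge0 p_le1] d_ge0 dn.
have k_ge0 : 0 <= eps ^+ 2 := sqr_ge0 eps.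
have k_le := sqr_le_ninth (ltW eps_gt0) eps_le.
have kk_ge0 := mulr_ge0 k_ge0 k_ge0.
have := ler_wpM2l (mulr_ge0 kk_ge0 p_ge0) dn.
have := ler_wpM2l (mulr_ge0 kk_ge0 d_ge0) p_le1.
have := ler_wpM2r (mulr_ge0 k_ge0 d_ge0) k_le.
have -> : eps ^+ 4 = eps ^+ 2 * eps ^+ 2 by rewrite -exprD.
lra.
Qed.

Theorem claim5p8 :
  exists c : R, 0 < c /\
  forall (V : finType) (e : rel V), simple_graph e -> (0 < #|V|)%nat ->
  forall (eps delta p : R),
    0 < eps -> eps < 3^-1 -> 0 < delta -> 0 < p -> p < 1 ->
  forall D : {set V},
    near_clique e (eps ^+ 3) D ->
    delta * (#|V|%:R : R) <= (#|D|%:R : R) ->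
    let C := Kset e (eps ^+ 2) D :&: D in
    1 - (eps ^+ 2 * delta)^-1 *
          expR (- (c * eps ^+ 4 * delta * p * (#|V|%:R : R)))
      <= prob_subset (p * 2^-1) (fun S => representative e eps D C (S :&: C)).
Proof.
exists (1/1600); split; first by rewrite divr_gt0 ?ltr0n.
move=> V e e_simple V_gt0 eps delta p eps_gt0 eps_lt delta_gt0 p_gt0 p_lt1 D nc Dn /=.
have eps_le : eps <= 1/3 by lra.
have eps_b : 0 < eps <= 1/3 by rewrite eps_gt0 eps_le.
have p_b : 0 <= p <= 1 by apply/andP; split; lra.
have q_ge0 : 0 <= p * 2^-1 by lra.
have q_le1 : p * 2^-1 <= 1 by lra.
have n_gt0 : 0 < #|V|%:R :> R by rewrite ltr0n.
have d_le_n : #|D|%:R <= #|V|%:R :> R by rewrite ler_nat max_card.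
have delta_b : 0 < delta <= 1 by apply/andP; split; nra.
have [x_le1|x_gt1] := lerP (1/1600 * eps ^+ 4 * delta * p * #|V|%:R) 1.
  apply: le_trans (small_exponent_vacuous eps_b delta_b x_le1) _.
  exact: prob_subset_ge0.
have kd := exponent_ge1_sqr_card_ge9 eps_b p_b (ler0n _ _) Dn (ltW x_gt1).
have C_large := card_core_ge e_simple eps_b nc kd.
have C_gt0 : (0 < #|Kset e (eps ^+ 2) D :&: D|)%nat.
  by rewrite -(ltr0n R); have := mulr_gt0 delta_gt0 n_gt0; lra.
have dn : delta * #|V|%:R <= 2 * #|Kset e (eps ^+ 2) D :&: D|%:R.
  by have := ler0n R #|D|; lra.
have bound := failure_bound_le eps_b delta_b (ltW p_gt0) n_gt0 dn (ltW x_gt1).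
apply: le_trans (lerB (lexx 1) bound) _.
rewrite lerBlDr addrC -lerBlDr.
exact: representative_failure_le eps_gt0 eps_le q_ge0 q_le1 C_gt0 C_large.
Qed.
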